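(* Let $A,B,C$ be finite sets and let $\omega$ be a probability distribution on $A\times B\times C$ with full support, i.e. $\omega^{ijk}>0$ for all $i\in A$, $j\in B$, $k\in C$. Then there exist a unique 2-comb $f\colon B\to A\otimes C$ in $\mathsf{Stoch}$ and a unique stochastic matrix $g\colon A\to B$ such that $$\omega^{ijk}=f_j^{ik}\,g_i^j\qquad\text{for all } i\in A,\ j\in B,\ k\in C,$$ i.e. $\omega$ equals the composite (in the category of nonnegative real matrices) obtained by copying the $A$-output of $f$, feeding one copy into $g$, copying the output of $g$, and feeding one copy of it back into the input $B$ of $f$, with outputs $A$, $B$, $C$.
   Context: $\mathsf{Stoch}$ is the category whose objects are finite sets and whose morphisms $h\colon X\to Y$ are matrices $(h_x^y)$ of nonnegative reals with $\sum_{y} h_x^y=1$ for each $x$ (row index as superscript, column index as subscript); states $I\to Y$ ($I$ a one-point set) are probability distributions, and a morphism $A_1\otimes A_2\to B_1\otimes B_2$ has entries $h_{a_1a_2}^{b_1b_2}$. A morphism $h$ has full support if it has no zero entries. A 2-comb in $\mathsf{Stoch}$ is a stochastic matrix $h\colon A_1\otimes A_2\to B_1\otimes B_2$ such that there is a stochastic matrix $h'\colon A_1\to B_1$ with $\sum_{b_2} h_{a_1a_2}^{b_1b_2}=h'^{\,b_1}_{a_1}$ for all $a_1,a_2,b_1$ (discarding the output $B_2$ equals $h'$ tensored with discarding $A_2$). Here $f\colon B\to A\otimes C$ is viewed as a 2-comb with $A_1=I$ trivial, $A_2=B$, $B_1=A$, $B_2=C$; thus the condition is that $\sum_{k\in C}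 f_j^{ik}$ is independent of $j\in B$. *)

From HB Require Import structures.
From mathcomp Require Import all_boot all_order all_algebra.
From mathcomp Require Import reals.
Set Implicit Arguments. Unset Strict Implicit. Unset Printing Implicit Defensive.
Import Order.TTheory GRing.Theory Num.Theory.
Local Open Scope ring_scope.

(* A morphism h : X -> Y of Stoch: a matrix h x y (= h_x^y) of nonnegative
   reals whose rows (indexed by the input x) sum to 1.  Tensor products of
   finite sets are cartesian products; the unit object I is [unit]. *)
Definition is_stoch (R : realType) (X Y : finType)
  (h : {ffun X -> {ffun Y -> R}}) : Prop :=
  (forall x y, 0 <= h x y) /\ (forall x, \sum_(y : Y) h x y = 1).

(* A 2-comb h : A1 (x) A2 -> B1 (x) B2: a stochastic matrix such that
   discarding B2 equals some stochastic h' : A1 -> B1 tensored with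
   discarding A2. *)
Definition is_2comb (R : realType) (A1 A2 B1 B2 : finType)
  (h : {ffun (A1 * A2) -> {ffun (B1 * B2) -> R}}) : Prop :=
  is_stoch h /\
  exists h' : {ffun A1 -> {ffun B1 -> R}},
    is_stoch h' /\
    forall a1 a2 b1, \sum_(b2 : B2) h (a1, a2) (b1, b2) = h' a1 b1.

(** Write ω(i,j) and ω(i) for the marginals of ω.  The only candidates are
    g_i^j = ω(j | i) = ω(i,j) / ω(i) and f_j^{ik} = ω(i) ω(k | i,j): summing
    ω = f g over k, using the comb condition Σ_k f_j^{ik} = h'(i) and then
    summing over j with Σ_j g_i^j = 1 yields h'(i) = ω(i) and ω(i,j) = ω(i) g_i^j,
    which determine g and then f because full support makes every marginal
    positive.  Conversely these f and g are stochastic, f is a comb with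
    h' = ω(i), and f g = ω. *)
From HB Require Import structures.
From mathcomp Require Import all_boot all_order all_algebra.
From mathcomp Require Import reals.
From mathcomp Require Import ring lra.
Import Order.TTheory GRing.Theory Num.Theory.
Local Open Scope ring_scope.

Lemma sumr_gt0 (R : numDomainType) (T : finType) (F : T -> R) :
  inhabited T -> (forall x, 0 < F x) -> 0 < \sum_x F x.
Proof.
move=> [x0] F_gt0; apply: (lt_le_trans (F_gt0 x0)).
rewrite (bigD1 x0) //= lerDl sumr_ge0 // => x _; exact/ltW.
Qed.

Section CombFactorization.

Context {R : realType} {A B C : finType} (omega : {ffun A * B * C -> R}).

Definition marginalAB (i : A) (j : B) : R := \sum_(k : C) omega (i, j, k).

Definition marginalA (i : A) : R := \sum_(j : B) marginalAB i j.

Definition omega_channel : {ffun A -> {ffun B -> R}} :=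
  [ffun i => [ffun j => marginalAB i j / marginalA i]].

Definition omega_comb : {ffun unit * B -> {ffun A * C -> R}} :=
  [ffun x => [ffun ik => marginalA ik.1 * omega (ik.1, x.2, ik.2)
                          / marginalAB ik.1 x.2]].

Definition omega_comb_discarded : {ffun unit -> {ffun A -> R}} :=
  [ffun _ => [ffun i => marginalA i]].

Section FactoredMarginals.

Context {f : {ffun unit * B -> {ffun A * C -> R}}} {f' : {ffun unit -> {ffun A -> R}}}
  {g : {ffun A -> {ffun B -> R}}}.
Hypothesis f_discard : forall u j i, \sum_(k : C) f (u, j) (i, k) = f' u i.
Hypothesis g_rows : forall i, \sum_(j : B) g i j = 1.
Hypothesis omega_fg : forall i j k, omega (i, j, k) = f (tt, j) (i, k) * g i j.

Lemma marginalAB_factor i j : marginalAB i j = f' tt i * g i j.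
Proof.
by rewrite /marginalAB; under eq_bigr do rewrite omega_fg; rewrite -mulr_suml f_discard.
Qed.

Lemma marginalA_factor i : marginalA i = f' tt i.
Proof.
rewrite /marginalA; under eq_bigr do rewrite marginalAB_factor.
by rewrite -mulr_sumr g_rows mulr1.
Qed.

End FactoredMarginals.

Hypothesis omega_gt0 : forall i j k, 0 < omega (i, j, k).
Hypothesis omega_sum1 : \sum_(x : A * B * C) omega x = 1.

Lemma triple_inhabited : inhabited (A * B * C).
Proof.
case: (pickP (@predT (A * B * C)%type)) => [x _ | no_x]; first exact: inhabits x.
by move: omega_sum1; rewrite big_pred0 // => /eqP; rewrite eq_sym oner_eq0.
Qed.

Lemma marginalAB_gt0 i j : 0 < marginalAB i j.
Proof.
have [[_ k]] := triple_inhabited.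
by apply: sumr_gt0 => [|k']; [exact: inhabits k | exact: omega_gt0].
Qed.

Lemma marginalA_gt0 i : 0 < marginalA i.
Proof.
have [[[_ j] _]] := triple_inhabited.
by apply: sumr_gt0 => [|j']; [exact: inhabits j | exact: marginalAB_gt0].
Qed.

Lemma sum_marginalA : \sum_i marginalA i = 1.
Proof.
rewrite -omega_sum1 /marginalA /marginalAB.
rewrite (pair_big predT predT (fun i j => \sum_k omega (i, j, k))) /=.
rewrite (pair_big predT predT (fun ij k => omega (ij.1, ij.2, k))) /=.
by apply: eq_bigr => -[[]].
Qed.

Lemma omega_channel_stoch : is_stoch omega_channel.
Proof.
split=> [i j | i]; rewrite ?ffunE.
  by rewrite divr_ge0 ?ltW ?marginalAB_gt0 ?marginalA_gt0.
under eq_bigr do rewrite !ffunE.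
by rewrite -mulr_suml mulfV // gt_eqF ?marginalA_gt0.
Qed.

Lemma omega_comb_discard u j i :
  \sum_(k : C) omega_comb (u, j) (i, k) = omega_comb_discarded u i.
Proof.
under eq_bigr do rewrite !ffunE /=.
rewrite -mulr_suml -mulr_sumr -/(marginalAB i j) !ffunE.
by rewrite -mulrA mulfV ?mulr1 // gt_eqF ?marginalAB_gt0.
Qed.

Lemma omega_comb_discarded_stoch : is_stoch omega_comb_discarded.
Proof.
split=> [u i | u]; first by rewrite !ffunE ltW ?marginalA_gt0.
by rewrite -sum_marginalA; apply: eq_bigr => i _; rewrite !ffunE.
Qed.

Lemma omega_comb_2comb : is_2comb omega_comb.
Proof.
split; last first.
  exists omega_comb_discarded.
  by split; [exact: omega_comb_discarded_stoch | exact: omega_comb_discard].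
split=> [x [i k] | [u j]].
  by rewrite !ffunE divr_ge0 ?mulr_ge0 ?ltW ?marginalA_gt0 ?marginalAB_gt0 ?omega_gt0.
transitivity (\sum_i \sum_k omega_comb (u, j) (i, k)).
  by rewrite pair_big; apply: eq_bigr => -[].
rewrite -sum_marginalA; apply: eq_bigr => i _.
by rewrite omega_comb_discard !ffunE.
Qed.

Lemma omega_comb_channel i j k :
  omega (i, j, k) = omega_comb (tt, j) (i, k) * omega_channel i j.
Proof.
rewrite !ffunE /=.
have := marginalAB_gt0 i j; have := marginalA_gt0 i => ? ?; field; lra.
Qed.

Lemma omega_factorization_unique {f : {ffun unit * B -> {ffun A * C -> R}}}
    {f' : {ffun unit -> {ffun A -> R}}} {g : {ffun A -> {ffun B -> R}}} :
  (forall u j i, \sum_(k : C) f (u, j) (i, k) = f' u i) ->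
  (forall i, \sum_(j : B) g i j = 1) ->
  (forall i j k, omega (i, j, k) = f (tt, j) (i, k) * g i j) ->
  f = omega_comb /\ g = omega_channel.
Proof.
move=> f_discard g_rows omega_fg.
have marginalA_f' := marginalA_factor f_discard g_rows omega_fg.
have marginalAB_f'g := marginalAB_factor f_discard omega_fg.
have f'_gt0 i : 0 < f' tt i by rewrite -marginalA_f' marginalA_gt0.
have g_gt0 i j : 0 < g i j.
  by have := marginalAB_gt0 i j; rewrite marginalAB_f'g pmulr_rgt0.
split.
  apply/ffunP => -[[] j]; apply/ffunP => -[i k]; rewrite !ffunE /=.
  rewrite omega_fg marginalA_f' marginalAB_f'g.
  by have := f'_gt0 i; have := g_gt0 i j => ? ?; field; lra.
apply/ffunP => i; apply/ffunP => j; rewrite !ffunE marginalA_f' marginalAB_f'g.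
by have := f'_gt0 i => ?; field; lra.
Qed.

End CombFactorization.

Theorem theorem1 (R : realType) (A B C : finType)
  (omega : {ffun (A * B * C) -> R})
  (homega_pos : forall i j k, 0 < omega (i, j, k))
  (homega_sum : \sum_(x : A * B * C) omega x = 1) :
  exists! fg : {ffun (unit * B) -> {ffun (A * C) -> R}} * {ffun A -> {ffun B -> R}},
    [/\ is_2comb fg.1, is_stoch fg.2 &
        forall i j k, omega (i, j, k) = fg.1 (tt, j) (i, k) * fg.2 i j].
Proof.
exists (omega_comb omega, omega_channel omega); split.
  split=> /=; [exact: omega_comb_2comb | exact: omega_channel_stoch |].
  exact: omega_comb_channel.
move=> [f g] /= [[_ [f' [_ f_discard]]] [_ g_rows] omega_fg].
by have [-> ->] :=
  omega_factorization_unique omega homega_pos homega_sum f_discard g_rows omega_fg.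
Qed.
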